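(* Let $w\in\{0,1\}^*$ and let $w'$ be a subword of $w$ such that $w'=abb\,\mu(w'')$ or $w'=\mu(w'')\,bba$ for some letters $a,b\in\{0,1\}$ with $a\neq b$ and some word $w''\in\{0,1\}^*$ with $|w''|\geq 2$. Then $w$ contains a $\frac{7}{3}$-power (i.e., $w$ is not $\frac{7}{3}$-power-free).
   Context: $\mu$ is the Thue–Morse morphism on $\{0,1\}^*$, defined by $\mu(0)=01$, $\mu(1)=10$. A word $w'$ is a subword of $w$ if $w=uw'v$ for some words $u,v$. For a rational $\alpha\ge 1$, an $\alpha$-power is a word of the form $x^nx'$ with $x$ a nonempty word, $x'$ a prefix of $x$, $n$ a nonnegative integer and $n+|x'|/|x|=\alpha$. A word is $\alpha$-power-free if none of its subwords is a $\beta$-power for any rational $\beta\geq\alpha$; otherwise it contains an $\alpha$-power. *)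

From mathcomp Require Import all_boot all_order all_algebra.
Set Implicit Arguments. Unset Strict Implicit. Unset Printing Implicit Defensive.
Import Order.TTheory GRing.Theory Num.Theory.

(* Binary words are [seq bool]; letter 0 is [false], letter 1 is [true]. *)

Definition mu (w : seq bool) : seq bool :=
  flatten (map (fun c : bool => [:: c; ~~ c]) w).

Definition subword (w' w : seq bool) : Prop := exists u v, w = u ++ w' ++ v.

Definition is_power (alpha : rat) (y : seq bool) : Prop :=
  exists (x x' : seq bool) (n : nat),
    x != [::] /\ prefix x' x /\ y = flatten (nseq n x) ++ x' /\
    (n%:R + (size x')%:R / (size x)%:R = alpha)%R.

Definition power_free (alpha : rat) (w : seq bool) : Prop :=
  forall y, subword y w -> forall beta : rat, (alpha <= beta)%R -> ~ is_power beta y.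

From mathcomp Require Import all_boot all_order all_algebra.
Import Order.TTheory.

(* Let [c ~~c] and [d ~~d] be the two blocks of
   [mu w''] next to [abb] (resp. [bba]). Whatever c and d are, these seven
   letters contain a cube [bbb], the overlap [babab] of exponent 5/2, or
   [abbabba] of exponent 7/3. *)

Lemma subword_trans {u v w : seq bool} : subword u v -> subword v w -> subword u w.
Proof.
by move=> [p [q ->]] [p' [q' ->]]; exists (p' ++ p), (q ++ q'); rewrite -!catA.
Qed.

Lemma power_free_subword {alpha : rat} {v w : seq bool} :
  subword v w -> power_free alpha w -> power_free alpha v.
Proof. by move=> svw hw y syv; apply: hw; apply: subword_trans syv svw. Qed.

Lemma infix_power_not_power_free {alpha beta : rat} (u : seq bool) {y v : seq bool} :
  is_power beta y -> (alpha <= beta)%R -> ~ power_free alpha (u ++ y ++ v).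
Proof. by move=> hy hab hw; apply: hw hy => //; exists u, v. Qed.

Lemma is_power_cube (b : bool) : is_power 3%:R [:: b; b; b].
Proof. by exists [:: b], [::], 3. Qed.

Lemma is_power_five_halves (a b : bool) : is_power (5%:R / 2%:R) [:: b; a; b; a; b].
Proof. by exists [:: b; a], [:: b], 2; rewrite /prefix /= eqxx; do !split. Qed.

Lemma is_power_seven_thirds (a b : bool) :
  is_power (7%:R / 3%:R) [:: a; b; b; a; b; b; a].
Proof. by exists [:: a; b; b], [:: a], 2; rewrite /prefix /= eqxx; do !split. Qed.

Lemma seven_thirds_le_cube : (7%:R / 3%:R <= 3%:R :> rat)%R.
Proof. by vm_compute. Qed.

Lemma seven_thirds_le_five_halves : (7%:R / 3%:R <= 5%:R / 2%:R :> rat)%R.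
Proof. by vm_compute. Qed.

Lemma mu_cat (s t : seq bool) : mu (s ++ t) = mu s ++ mu t.
Proof. by rewrite /mu map_cat flatten_cat. Qed.

Lemma mu_cons2 (c d : bool) (t : seq bool) :
  mu [:: c, d & t] = [:: c; ~~ c; d; ~~ d] ++ mu t.
Proof. by []. Qed.

Lemma mu_rcons2 (t : seq bool) (c d : bool) :
  mu (rcons (rcons t c) d) = mu t ++ [:: c; ~~ c; d; ~~ d].
Proof. by rewrite -!cats1 -catA mu_cat. Qed.

Lemma abb_mu2_not_power_free (a c d : bool) :
  ~ power_free (7%:R / 3%:R) [:: a; ~~ a; ~~ a; c; ~~ c; d; ~~ d].
Proof.
have le_cube := seven_thirds_le_cube; have le_five := seven_thirds_le_five_halves.
case: a c d => [] [] [].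
- exact: (infix_power_not_power_free [:: true; false] (is_power_five_halves _ _) le_five).
- exact: (infix_power_not_power_free [::] (is_power_seven_thirds _ _) (lexx _)).
- exact: (infix_power_not_power_free [:: true] (is_power_cube _) le_cube).
- exact: (infix_power_not_power_free [:: true] (is_power_cube _) le_cube).
- exact: (infix_power_not_power_free [:: false] (is_power_cube _) le_cube).
- exact: (infix_power_not_power_free [:: false] (is_power_cube _) le_cube).
- exact: (infix_power_not_power_free [::] (is_power_seven_thirds _ _) (lexx _)).
- exact: (infix_power_not_power_free [:: false; true] (is_power_five_halves _ _) le_five).
Qed.

Lemma mu2_bba_not_power_free (a c d : bool) :
  ~ power_free (7%:R / 3%:R) [:: c; ~~ c; d; ~~ d; ~~ a; ~~ a; a].
Proof.
have le_cube := seven_thirds_le_cube; have le_five := seven_thirds_le_five_halves.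
case: a c d => [] [] [].
- exact: (infix_power_not_power_free [:: true; false; true] (is_power_cube _) le_cube).
- exact: (infix_power_not_power_free [::] (is_power_seven_thirds _ _) (lexx _)).
- exact: (infix_power_not_power_free [:: false; true; true] (is_power_cube _) le_cube).
- exact: (infix_power_not_power_free [::] (is_power_five_halves _ _) le_five).
- exact: (infix_power_not_power_free [::] (is_power_five_halves _ _) le_five).
- exact: (infix_power_not_power_free [:: true; false; false] (is_power_cube _) le_cube).
- exact: (infix_power_not_power_free [::] (is_power_seven_thirds _ _) (lexx _)).
- exact: (infix_power_not_power_free [:: false; true; false] (is_power_cube _) le_cube).
Qed.

Theorem lemma4 (w w' w'' : seq bool) (a b : bool) :
  subword w' w -> a != b -> 2 <= size w'' ->
  (w' = [:: a; b; b] ++ mu w'' \/ w' = mu w'' ++ [:: b; b; a]) ->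
  ~ power_free (7%:R / 3%:R)%R w.
Proof.
move=> sw'w hab hsz; have {hab} -> : b = ~~ a by case: a b hab => [] [].
move=> hw' hw.
have {sw'w hw} := power_free_subword sw'w hw.
case: hw' => ->.
- case: w'' hsz => [|c [|d t]] // _; rewrite mu_cons2 => hw'.
  apply: (abb_mu2_not_power_free a c d); apply: power_free_subword hw'.
  by exists [::], (mu t).
- case/lastP: w'' hsz => [|s d] //; case/lastP: s => [|t c] // _.
  rewrite mu_rcons2 => hw'.
  apply: (mu2_bba_not_power_free a c d); apply: power_free_subword hw'.
  by exists (mu t), [::]; rewrite cats0 -catA.
Qed.
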